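(* Let $d\ge2$ and let $\{U^{(a)}_j\}_{j=0}^{d^2-1}$, $a=0,\dots,d^2-2$, be a complete set of mutually unbiased unitary-operator bases for $\operatorname{End}(\mathbb{C}^d)$ (i.e. $d^2-1$ unitary operator bases, pairwise mutually unbiased). Then the collection of all $d^2(d^2-1)$ operators, taken as elements of $\operatorname{PU}(d)$ and each given weight $1/(d^2(d^2-1))$, forms a weighted unitary $2$-design; that is, $$\frac{1}{d^2(d^2-1)}\sum_{a=0}^{d^2-2}\sum_{j=0}^{d^2-1}U^{(a)}_j\otimes U^{(a)}_j\otimes U^{(a)\dagger}_j\otimes U^{(a)\dagger}_j=\int_{\operatorname{PU}(d)}d\mu(x)\,U(x)^{\otimes2}\otimes(U(x)^{\otimes2})^\dagger.$$
   Context: A unitary operator basis for $\operatorname{End}(\mathbb{C}^d)$ is a set $\{U_j\}_{j=0}^{d^2-1}\subset\operatorname{U}(d)$ with $\operatorname{tr}(U_j^\dagger U_k)=d\,\delta_{jk}$. Two unitary operator bases $\{U_j\}$, $\{V_k\}$ are mutually unbiased if $|\operatorname{tr}(U_j^\dagger V_k)|^2=1$ for all $j,k$. $\mu$ is the Haar probability measure on $\operatorname{PU}(d)=\operatorname{U}(d)/\operatorname{U}(1)$ and $U(x)$ a representative of $x$. *)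

From HB Require Import structures.
From mathcomp Require Import all_boot all_order all_algebra.
From mathcomp Require Import spectral.
Set Implicit Arguments. Unset Strict Implicit. Unset Printing Implicit Defensive.
Import Order.TTheory GRing.Theory Num.Theory.
Local Open Scope ring_scope.

Section Defs.
Variable C : numClosedFieldType.
Variable d : nat.

Definition adjmx (U : 'M[C]_d) : 'M[C]_d := (map_mx Num.conj U)^T.

Definition unitary_operator_basis (U : 'I_(d ^ 2) -> 'M[C]_d) : Prop :=
  (forall j, U j \is unitarymx) /\
  (forall j k, \tr (adjmx (U j) *m U k) = (d * (j == k))%:R).

Definition mutually_unbiased (U V : 'I_(d ^ 2) -> 'M[C]_d) : Prop :=
  forall j k, `|\tr (adjmx (U j) *m V k)| ^+ 2 = 1.

(* Multi-index for End((C^d)^{⊗4}). *)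
Definition idx4 := ('I_d * 'I_d * 'I_d * 'I_d)%type.

(* Entry ((i1,i2,i3,i4),(j1,j2,j3,j4)) of U ⊗ U ⊗ U^dag ⊗ U^dag
   (Kronecker convention (A⊗B)_{(i,k),(j,l)} = A_{ij} B_{kl}). *)
Definition tens22 (U : 'M[C]_d) (I J : idx4) : C :=
  let: (i1, i2, i3, i4) := I in
  let: (j1, j2, j3, j4) := J in
  U i1 j1 * U i2 j2 * adjmx U i3 j3 * adjmx U i4 j4.

(* Polynomial functions on U(d) spanned by the matrix entries of
   U^{⊗2} ⊗ (U^{⊗2})^dag, represented by a coefficient array c. *)
Definition polyfun (c : idx4 -> idx4 -> C) (U : 'M[C]_d) : C :=
  \sum_(I : idx4) \sum_(J : idx4) c I J * tens22 U I J.

(* The Haar integral (w.r.t. the Haar probability measure, on U(d) or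
   equivalently on PU(d), the integrands being phase invariant), restricted
   to this space of functions: a linear functional on functions (well defined,
   i.e. depending only on the function on U(d)), invariant under left
   translation by unitaries, and normalised (integral of 1 is 1). *)
Definition haar_integral (E : (idx4 -> idx4 -> C) -> C) : Prop :=
  (forall (a : C) c c', E (fun I J => a * c I J + c' I J) = a * E c + E c') /\
  (forall (V : 'M[C]_d) c c', V \is unitarymx ->
     (forall U : 'M[C]_d, U \is unitarymx -> polyfun c' U = polyfun c (V *m U)) ->
     E c' = E c) /\
  (forall c, (forall U : 'M[C]_d, U \is unitarymx -> polyfun c U = 1) -> E c = 1).

Definition entry_coef (I J : idx4) : idx4 -> idx4 -> C :=
  fun I' J' => ((I' == I) && (J' == J))%:R.

End Defs.

From mathcomp Require Import all_boot all_order all_algebra.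
From mathcomp Require Import spectral ring zify.
Import GRing.Theory Num.Theory.
Set Implicit Arguments. Unset Strict Implicit. Unset Printing Implicit Defensive.
Local Open Scope ring_scope.

(* Arrays indexed by idx4 d x idx4 d are compared through the contraction
   contr, whose conjugate-symmetric version is the Hilbert-Schmidt inner
   product.  The proof has three parts.
   1. Weingarten calculus for t = 2: the Haar second moment should be the
      array W = sum_(s,t) Wg(s (+) t) perm_arr s t, where Wg is the inverse
      of the Gram matrix of the two permutations of {1,2}.  We compute
      <tens22 x, W> = 2 for unitary x and <W, W> = 2.
   2. Frame potential: if a finite family of unitaries V_p satisfies
      sum_(p,q) |tr(V_q^dag V_p)|^4 = 2 |X|^2, then |S - |X| W|^2 = 0 for
      S = sum_p tens22 V_p, so S = |X| W (equality case of Cauchy-Schwarz).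
      Mutual unbiasedness gives exactly this value for the MUB family.
   3. Haar integral: left invariance expresses the integral of a monomial
      through integrals of monomials; averaging this over the design and
      using U^dag U = 1 shows that the integral of each monomial is W. *)

Section IndexSums.
Context {R : comPzRingType} (d : nat).
Local Notation idx := (idx4 d).

Lemma sum_pair (A B : finType) (F : A * B -> R) :
  \sum_(p : A * B) F p = \sum_(a : A) \sum_(b : B) F (a, b).
Proof. by rewrite pair_big; apply: eq_bigr => -[]. Qed.

Lemma sum_idx4 (F : idx -> R) :
  \sum_(I : idx) F I = \sum_i1 \sum_i2 \sum_i3 \sum_i4 F (i1, i2, i3, i4).
Proof. by rewrite !sum_pair. Qed.

Lemma sum_idx4x4 (F : idx -> idx -> R) :
  \sum_(I : idx) \sum_(J : idx) F I J =
  \sum_i1 \sum_j1 \sum_i2 \sum_j2 \sum_i3 \sum_j3 \sum_i4 \sum_j4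
     F (i1, i2, i3, i4) (j1, j2, j3, j4).
Proof.
rewrite sum_idx4; apply: eq_bigr => i1 _.
under eq_bigr => i2 _ do under eq_bigr => i3 _ do under eq_bigr => i4 _ do
  rewrite sum_idx4.
under eq_bigr => i2 _ do under eq_bigr => i3 _ do
  (rewrite exchange_big; under eq_bigr => j1 _ do
     (rewrite exchange_big; under eq_bigr => j2 _ do rewrite exchange_big)).
under eq_bigr => i2 _ do
  (rewrite exchange_big; under eq_bigr => j1 _ do rewrite exchange_big).
by rewrite exchange_big.
Qed.

Definition kdelta (a b : 'I_d) : R := (a == b)%:R.

Lemma sum_kdelta (a : 'I_d) (G : 'I_d -> R) : \sum_j G j * kdelta a j = G a.
Proof.
rewrite (bigD1 a) //= big1 ?addr0 /kdelta ?eqxx ?mulr1 // => j /negbTE.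
by rewrite eq_sym => ->; rewrite mulr0.
Qed.

Lemma mulr4ACA (a1 a2 a3 a4 b1 b2 b3 b4 : R) :
  a1 * a2 * a3 * a4 * (b1 * b2 * b3 * b4) =
  a1 * b1 * (a2 * b2) * (a3 * b3) * (a4 * b4).
Proof. by rewrite mulrACA [a1 * a2 * a3 * _]mulrACA [a1 * a2 * _]mulrACA. Qed.

Lemma sum_mul_sum (f g : 'I_d -> R) :
  \sum_a \sum_b f a * g b = (\sum_a f a) * (\sum_b g b).
Proof. by rewrite big_distrl; apply: eq_bigr => a _; rewrite big_distrr. Qed.

Lemma sum2_mul_sum2 (f g : 'I_d -> 'I_d -> R) :
  \sum_a \sum_b \sum_c \sum_e f a b * g c e =
  (\sum_a \sum_b f a b) * (\sum_c \sum_e g c e).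
Proof.
rewrite big_distrl; apply: eq_bigr => a _; rewrite big_distrl.
apply: eq_bigr => b _; rewrite big_distrr; apply: eq_bigr => c _.
by rewrite big_distrr.
Qed.

Lemma prod4_sums (f1 f2 f3 f4 : 'I_d -> R) :
  (\sum_a f1 a) * (\sum_a f2 a) * (\sum_a f3 a) * (\sum_a f4 a) =
  \sum_k1 \sum_k2 \sum_k3 \sum_k4 (f1 k1 * f2 k2 * f3 k3 * f4 k4).
Proof.
symmetry; under eq_bigr => k1 _ do under eq_bigr => k2 _ do
  under eq_bigr => k3 _ do rewrite -mulr_sumr.
under eq_bigr => k1 _ do under eq_bigr => k2 _ do rewrite -!mulr_suml -mulr_sumr.
by under eq_bigr => k1 _ do rewrite -!mulr_suml -mulr_sumr; rewrite -!mulr_suml.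
Qed.

Lemma sum8_factor (f1 f2 f3 f4 : 'I_d -> 'I_d -> R) :
  \sum_i1 \sum_j1 \sum_i2 \sum_j2 \sum_i3 \sum_j3 \sum_i4 \sum_j4
    (f1 i1 j1 * f2 i2 j2 * f3 i3 j3 * f4 i4 j4) =
  (\sum_a \sum_b f1 a b) * (\sum_a \sum_b f2 a b) *
  (\sum_a \sum_b f3 a b) * (\sum_a \sum_b f4 a b).
Proof.
have factor_l (P : R) (f : 'I_d -> 'I_d -> R) :
    \sum_a \sum_b P * f a b = P * \sum_a \sum_b f a b.
  by under eq_bigr do rewrite -mulr_sumr; rewrite -mulr_sumr.
have factor_r (P : R) (f : 'I_d -> 'I_d -> R) :
    \sum_a \sum_b f a b * P = (\sum_a \sum_b f a b) * P.
  by under eq_bigr do rewrite -mulr_suml; rewrite -mulr_suml.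
under eq_bigr => i1 _ do under eq_bigr => j1 _ do under eq_bigr => i2 _ do
  under eq_bigr => j2 _ do under eq_bigr => i3 _ do under eq_bigr => j3 _ do
  rewrite factor_l.
under eq_bigr => i1 _ do under eq_bigr => j1 _ do under eq_bigr => i2 _ do
  under eq_bigr => j2 _ do rewrite factor_r factor_l.
under eq_bigr => i1 _ do under eq_bigr => j1 _ do rewrite factor_r factor_r factor_l.
by rewrite factor_r factor_r factor_r.
Qed.

End IndexSums.

Section Contraction.
Context {R : comPzRingType} (T : finType).

Definition contr (c c' : T -> T -> R) : R := \sum_I \sum_J c I J * c' I J.

Lemma contrC (c c' : T -> T -> R) : contr c c' = contr c' c.
Proof. by apply: eq_bigr => I _; apply: eq_bigr => J _; rewrite mulrC. Qed.

Lemma contr_sumr (A : finType) (c : T -> T -> R) (P : A -> T -> T -> R) :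
  contr c (fun I J => \sum_k P k I J) = \sum_k contr c (P k).
Proof.
rewrite /contr; under eq_bigr => I _ do under eq_bigr => J _ do rewrite mulr_sumr.
by under eq_bigr => I _ do rewrite exchange_big; rewrite exchange_big.
Qed.

Lemma contr_suml (A : finType) (P : A -> T -> T -> R) (c : T -> T -> R) :
  contr (fun I J => \sum_k P k I J) c = \sum_k contr (P k) c.
Proof. by rewrite contrC contr_sumr; under eq_bigr do rewrite contrC. Qed.

Lemma contr_scaler (a : R) (c c' : T -> T -> R) :
  contr c (fun I J => a * c' I J) = a * contr c c'.
Proof.
rewrite /contr mulr_sumr; apply: eq_bigr => I _.
by rewrite mulr_sumr; apply: eq_bigr => J _; rewrite mulrCA.
Qed.

Lemma contr_sub_scaled (a b f : T -> T -> R) (n : R) :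
  contr (fun I J => a I J - n * f I J) (fun I J => b I J - n * f I J) =
  contr a b - n * contr a f - n * contr f b + n * n * contr f f.
Proof.
have expand (A B F : R) : (A - n * F) * (B - n * F) =
    A * B - n * (A * F) - n * (F * B) + n * n * (F * F).
  rewrite mulrBl !mulrBr opprB addrA addrAC [A * (n * F)]mulrCA -[n * F * B]mulrA.
  by rewrite mulrACA.
rewrite /contr; under eq_bigr => I _ do under eq_bigr => J _ do rewrite expand.
under eq_bigr => I _ do rewrite big_split /= !sumrB -!mulr_sumr.
by rewrite big_split /= !sumrB -!mulr_sumr.
Qed.

End Contraction.

Section ComplexContraction.
Context {C : numClosedFieldType} (T : finType).
Implicit Types c S F : T -> T -> C.

(* Entrywise complex conjugate; contr c (conjarr c) is the squared
   Hilbert-Schmidt norm of c. *)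
Definition conjarr c : T -> T -> C := fun I J => (c I J)^*.

Lemma contr_conj c c' : (contr c c')^* = contr (conjarr c) (conjarr c').
Proof.
rewrite rmorph_sum; apply: eq_bigr => I _.
by rewrite rmorph_sum; apply: eq_bigr => J _; rewrite rmorphM.
Qed.

Lemma contr_conj_eq0 c : contr c (conjarr c) = 0 -> forall I J, c I J = 0.
Proof.
move=> c0 I J.
have ge0 I' J' : 0 <= c I' J' * (c I' J')^* by rewrite -normCK exprn_ge0.
have row0 := psumr_eq0P (fun I' _ => sumr_ge0 _ (fun J' _ => ge0 I' J')) c0.
have := psumr_eq0P (fun J' _ => ge0 I J') (row0 I isT) (i:=J) isT.
by rewrite -normCK => /eqP; rewrite sqrf_eq0 normr_eq0 => /eqP.
Qed.

(* Equality case of Cauchy-Schwarz: if a real array F and an array S have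
   the Gram data of S = n F, then indeed S = n F. *)
Lemma eq_scaled_of_contr S F (n a : C) :
  (forall I J, (F I J)^* = F I J) -> n^* = n ->
  contr S (conjarr S) = n * n * a -> contr S F = n * a -> contr F F = a ->
  forall I J, S I J = n * F I J.
Proof.
move=> Freal nreal hSS hSF hFF.
have contr_realr c : contr c (conjarr F) = contr c F.
  by apply: eq_bigr => I _; apply: eq_bigr => J _; rewrite /conjarr Freal.
have a_real : a^* = a by rewrite -hFF contr_conj contr_realr contrC contr_realr.
have hFS : contr F (conjarr S) = n * a.
  by rewrite contrC -contr_realr -contr_conj hSF rmorphM /= nreal a_real.
move=> I J; apply/eqP; rewrite -subr_eq0; apply/eqP; move: I J.
apply: (contr_conj_eq0 (c := fun I J => S I J - n * F I J)).
have -> : contr (fun I J => S I J - n * F I J)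
            (conjarr (fun I J => S I J - n * F I J)) =
          contr (fun I J => S I J - n * F I J)
            (fun I J => conjarr S I J - n * F I J).
  by apply: eq_bigr => I _; apply: eq_bigr => J _;
     rewrite /conjarr rmorphB rmorphM /= nreal Freal.
rewrite contr_sub_scaled hSS hSF hFS hFF.
by rewrite mulrA subrr sub0r addNr.
Qed.
End ComplexContraction.

Section UnitaryEntries.
Context {C : numClosedFieldType} (d : nat).
Implicit Types x : 'M[C]_d.

Lemma adjmxE x i j : adjmx x i j = (x j i)^*.
Proof. by rewrite /adjmx !mxE. Qed.

Lemma mxtrace_adj_mul (x y : 'M[C]_d) :
  \tr (adjmx y *m x) = \sum_i \sum_j x i j * (y i j)^*.
Proof.
rewrite /mxtrace exchange_big; apply: eq_bigr => i _.
by rewrite mxE; apply: eq_bigr => k _; rewrite adjmxE mulrC.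
Qed.

Lemma unitary_rows x : x \is unitarymx ->
  forall i k, \sum_j x i j * (x k j)^* = (i == k)%:R.
Proof.
move=> /unitarymxP /matrixP ux i k; move: (ux i k); rewrite !mxE.
by under eq_bigr do rewrite !mxE.
Qed.

Lemma unitary_cols x : x \is unitarymx ->
  forall i k, \sum_j (x j i)^* * x j k = (i == k)%:R.
Proof.
rewrite -trmxC_unitary => /unitary_rows ux i k; rewrite -ux.
by apply: eq_bigr => j _; rewrite !mxE conjCK.
Qed.

Lemma unitary_sqnorm x : x \is unitarymx ->
  \sum_i \sum_j x i j * (x i j)^* = d%:R.
Proof.
move=> ux; under eq_bigr do rewrite (unitary_rows ux) eqxx.
by rewrite sumr_const card_ord.
Qed.

(* The two quartic entry sums of a unitary matrix arising from contracting
   its second moment with a permutation array. *)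
Lemma unitary_quartic_diag x : x \is unitarymx ->
  \sum_i1 \sum_j1 \sum_i2 \sum_j2
    x i1 j1 * x i2 j2 * (x i1 j1)^* * (x i2 j2)^* = d%:R ^+ 2.
Proof.
move=> ux; under eq_bigr => i1 _ do under eq_bigr => j1 _ do
  under eq_bigr => i2 _ do under eq_bigr => j2 _ do rewrite -mulrA mulrACA.
by rewrite sum2_mul_sum2 unitary_sqnorm.
Qed.

Lemma unitary_quartic_cross x : x \is unitarymx ->
  \sum_i1 \sum_j1 \sum_i2 \sum_j2
    x i1 j1 * x i2 j2 * (x i1 j2)^* * (x i2 j1)^* = d%:R.
Proof.
move=> ux; rewrite exchange_big.
under eq_bigr => j1 _ do under eq_bigr => i1 _ do rewrite exchange_big.
under eq_bigr => j1 _ do rewrite exchange_big.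
under eq_bigr => j1 _ do under eq_bigr => j2 _ do under eq_bigr => i1 _ do
  under eq_bigr => i2 _ do
    rewrite -mulrA mulrACA [x i1 j1 * _]mulrC [x i2 j2 * _]mulrC.
under eq_bigr => j1 _ do under eq_bigr => j2 _ do
  rewrite sum_mul_sum !(unitary_cols ux) eq_sym -/(kdelta _ _).
under eq_bigr => j1 _ do rewrite sum_kdelta /kdelta eqxx.
by rewrite sumr_const card_ord.
Qed.

End UnitaryEntries.

Section PermutationArrays.
Context {C : numClosedFieldType} (d : nat).
Local Notation idx := (idx4 d).

(* delta_{a_s(1), b1} delta_{a_s(2), b2}, where s is the transposition of
   {1, 2} when s = true and the identity otherwise. *)
Definition perm_delta (s : bool) (a1 a2 b1 b2 : 'I_d) : C :=
  kdelta (if s then a2 else a1) b1 * kdelta (if s then a1 else a2) b2.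

(* The coefficient array
     delta_{i_s(1) j3} delta_{i_s(2) j4} delta_{j_t(1) i3} delta_{j_t(2) i4}
   of the pair of permutations (s, t) in the Weingarten formula for the
   integral of U_{i1 j1} U_{i2 j2} conj(U_{j3 i3}) conj(U_{j4 i4}). *)
Definition perm_arr (s t : bool) (I J : idx) : C :=
  let: (i1, i2, i3, i4) := I in let: (j1, j2, j3, j4) := J in
  perm_delta s i1 i2 j3 j4 * perm_delta t j1 j2 i3 i4.

(* Gram entry d^(number of cycles of the relative permutation): d^2 when
   the permutations agree (b = false), d when they differ. *)
Definition gram (b : bool) : C := if b then d%:R else d%:R ^+ 2.

Lemma contr_perm_arr (G : idx -> idx -> C) s t :
  contr G (perm_arr s t) =
  \sum_i1 \sum_j1 \sum_i2 \sum_j2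
    G (i1, i2, if t then j2 else j1, if t then j1 else j2)
      (j1, j2, if s then i2 else i1, if s then i1 else i2).
Proof.
have reorder (g a b c e : C) : g * ((a * b) * (c * e)) = g * c * a * e * b.
  rewrite -!mulrA; congr (_ * _).
  by rewrite [b * (c * e)]mulrCA [a * (c * _)]mulrCA [e * b]mulrC.
rewrite /contr sum_idx4x4 /perm_arr /perm_delta /=.
under eq_bigr => i1 _ do under eq_bigr => j1 _ do under eq_bigr => i2 _ do
  under eq_bigr => j2 _ do under eq_bigr => i3 _ do under eq_bigr => j3 _ do
  under eq_bigr => i4 _ do under eq_bigr => j4 _ do rewrite reorder.
under eq_bigr => i1 _ do under eq_bigr => j1 _ do under eq_bigr => i2 _ do
  under eq_bigr => j2 _ do under eq_bigr => i3 _ do under eq_bigr => j3 _ do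
  under eq_bigr => i4 _ do rewrite sum_kdelta.
under eq_bigr => i1 _ do under eq_bigr => j1 _ do under eq_bigr => i2 _ do
  under eq_bigr => j2 _ do under eq_bigr => i3 _ do under eq_bigr => j3 _ do
  rewrite sum_kdelta.
under eq_bigr => i1 _ do under eq_bigr => j1 _ do under eq_bigr => i2 _ do
  under eq_bigr => j2 _ do under eq_bigr => i3 _ do rewrite sum_kdelta.
by under eq_bigr => i1 _ do under eq_bigr => j1 _ do under eq_bigr => i2 _ do
  under eq_bigr => j2 _ do rewrite sum_kdelta.
Qed.

Lemma contr_tens_perm (x : 'M[C]_d) s t : x \is unitarymx ->
  contr (tens22 x) (perm_arr s t) = gram (s (+) t).
Proof.
move=> ux; rewrite contr_perm_arr /gram.
case: s; case: t => /=; under eq_bigr => i1 _ do under eq_bigr => j1 _ do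
  under eq_bigr => i2 _ do under eq_bigr => j2 _ do rewrite !adjmxE.
- under eq_bigr => i1 _ do under eq_bigr => j1 _ do under eq_bigr => i2 _ do
    under eq_bigr => j2 _ do rewrite mulrAC.
  exact: unitary_quartic_diag.
- under eq_bigr => i1 _ do under eq_bigr => j1 _ do under eq_bigr => i2 _ do
    under eq_bigr => j2 _ do rewrite mulrAC.
  exact: unitary_quartic_cross.
- exact: unitary_quartic_cross.
- exact: unitary_quartic_diag.
Qed.

Lemma perm_delta_self s s' a1 a2 :
  perm_delta s a1 a2 (if s' then a2 else a1) (if s' then a1 else a2) =
  if s (+) s' then kdelta a1 a2 * kdelta a2 a1 else 1.
Proof.
by case: s; case: s'; rewrite /perm_delta /kdelta /= ?eqxx ?mulr1 // mulrC.
Qed.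

Lemma sum_perm_delta_self b :
  \sum_(a1 : 'I_d) \sum_(a2 : 'I_d) (if b then kdelta a1 a2 * kdelta a2 a1 else 1) = gram b.
Proof.
rewrite /gram; case: b.
  under eq_bigr => a1 _ do under eq_bigr => a2 _ do rewrite mulrC.
  under eq_bigr => a1 _ do rewrite sum_kdelta /kdelta eqxx.
  by rewrite sumr_const card_ord.
under eq_bigr do rewrite sumr_const card_ord.
rewrite sumr_const card_ord.
by rewrite expr2 mulr_natr.
Qed.

Lemma contr_perm_perm s t s' t' :
  contr (perm_arr s t) (perm_arr s' t') = gram (s (+) s') * gram (t (+) t').
Proof.
rewrite contr_perm_arr /perm_arr.
under eq_bigr => i1 _ do under eq_bigr => j1 _ do under eq_bigr => i2 _ do
  under eq_bigr => j2 _ do rewrite !perm_delta_self.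
under eq_bigr => i1 _ do rewrite exchange_big.
by rewrite sum2_mul_sum2 !sum_perm_delta_self.
Qed.

End PermutationArrays.

Section Weingarten.
Context {C : numClosedFieldType} (d : nat).
Hypothesis d_ge2 : (2 <= d)%N.
Local Notation idx := (idx4 d).
Local Notation D := (d%:R : C).

Lemma natd_neq0 : D != 0.
Proof. by rewrite pnatr_eq0 -lt0n (leq_trans _ d_ge2). Qed.

Lemma natd_sqB1_neq0 : D ^+ 2 - 1 != 0.
Proof.
rewrite subr_eq0 -natrX pnatr_eq1 gtn_eqF //.
by rewrite (@leq_trans (2 ^ 2)) // leq_exp2r.
Qed.

(* Weingarten function of S_2 in dimension d, indexed by whether the
   relative permutation is the transposition. *)
Definition wg (b : bool) : C :=
  if b then - (D * (D ^+ 2 - 1))^-1 else (D ^+ 2 - 1)^-1.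

Lemma wg_gram_inv s t : \sum_u wg (s (+) u) * gram d (u (+) t) = (s == t)%:R.
Proof.
have d0 := natd_neq0; have m0 := natd_sqB1_neq0.
by case: s; case: t; rewrite big_bool /wg /gram /=; field; rewrite d0 m0.
Qed.

(* The Weingarten array W = sum_(s,t) Wg(s^-1 t) perm_arr s t: the Haar
   integrals of the entries of U (x) U (x) U^dag (x) U^dag. *)
Definition weingarten (I J : idx) : C :=
  \sum_(p : bool * bool) wg (p.1 (+) p.2) * perm_arr p.1 p.2 I J.

Lemma contr_weingarten (c : idx -> idx -> C) :
  contr c weingarten =
  \sum_(p : bool * bool) wg (p.1 (+) p.2) * contr c (perm_arr p.1 p.2).
Proof.
rewrite (contr_sumr c (fun p I J => wg (p.1 (+) p.2) * perm_arr p.1 p.2 I J)).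
by under eq_bigr do rewrite contr_scaler.
Qed.

(* tr(Wg G) = 2, the dimension of the span of the two permutations. *)
Lemma sum_wg_gram :
  \sum_(p : bool * bool) wg (p.1 (+) p.2) * gram d (p.1 (+) p.2) = 2.
Proof.
rewrite sum_pair.
under eq_bigr => s _ do
  (under eq_bigr => t _ do rewrite {2}(addbC s t); rewrite wg_gram_inv eqxx).
by rewrite big_bool.
Qed.

Lemma contr_tens_weingarten (x : 'M[C]_d) : x \is unitarymx ->
  contr (tens22 x) weingarten = 2.
Proof.
move=> ux; rewrite contr_weingarten.
by under eq_bigr => p _ do rewrite contr_tens_perm //; exact: sum_wg_gram.
Qed.

Lemma contr_perm_weingarten s t :
  contr (perm_arr s t) weingarten = gram d (s (+) t).
Proof.
rewrite contr_weingarten sum_pair.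
under eq_bigr => s' _ do under eq_bigr => t' _ do
  rewrite contr_perm_perm /= mulrCA (addbC t t').
under eq_bigr => s' _ do rewrite -mulr_sumr wg_gram_inv.
by rewrite big_bool; case: s; case: t; rewrite /= ?mulr1 ?mulr0 ?addr0 ?add0r.
Qed.

Lemma contr_weingarten_sq : contr weingarten weingarten = 2.
Proof.
rewrite contr_weingarten.
by under eq_bigr => p _ do rewrite contrC contr_perm_weingarten; exact: sum_wg_gram.
Qed.

Lemma wg_real b : (wg b)^* = wg b.
Proof.
by case: b; rewrite /wg;
  do ?rewrite (fmorphV, rmorphN, rmorphM, rmorphB, rmorphXn, rmorph1, conjC_nat) /=.
Qed.

Lemma weingarten_real I J : (weingarten I J)^* = weingarten I J.
Proof.
case: I => [[[i1 i2] i3] i4]; case: J => [[[j1 j2] j3] j4].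
rewrite rmorph_sum; apply: eq_bigr => p _; rewrite rmorphM /= wg_real.
by rewrite /perm_arr /perm_delta /kdelta; do ?rewrite (rmorphM, conjC_nat) /=.
Qed.

End Weingarten.

Section FramePotential.
Context {C : numClosedFieldType} (d : nat).

Lemma contr_tens_conj (x y : 'M[C]_d) :
  contr (tens22 x) (conjarr (tens22 y)) = (`|\tr (adjmx y *m x)| ^+ 2) ^+ 2.
Proof.
rewrite /contr sum_idx4x4 /conjarr /=.
under eq_bigr => i1 _ do under eq_bigr => j1 _ do under eq_bigr => i2 _ do
  under eq_bigr => j2 _ do under eq_bigr => i3 _ do under eq_bigr => j3 _ do
  under eq_bigr => i4 _ do under eq_bigr => j4 _ do
  rewrite !rmorphM /= !adjmxE !conjCK mulr4ACA.
rewrite sum8_factor -mxtrace_adj_mul normCK.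
have -> : \sum_a \sum_b (x b a)^* * y b a = (\tr (adjmx y *m x))^*.
  rewrite mxtrace_adj_mul rmorph_sum exchange_big; apply: eq_bigr => i _.
  by rewrite rmorph_sum; apply: eq_bigr => j _; rewrite rmorphM /= conjCK.
by rewrite expr2 mulrACA -mulrA.
Qed.

Lemma design_of_frame_potential (X : finType) (V : X -> 'M[C]_d) :
  (2 <= d)%N -> (forall p, V p \is unitarymx) ->
  \sum_p \sum_q (`|\tr (adjmx (V q) *m V p)| ^+ 2) ^+ 2 = 2 * #|X|%:R ^+ 2 ->
  forall I J, \sum_p tens22 (V p) I J = #|X|%:R * weingarten I J.
Proof.
move=> d_ge2 uV frame.
apply: (eq_scaled_of_contr (a := 2)
  (@weingarten_real _ d) (conjC_nat _ _) _ _ (contr_weingarten_sq d_ge2)).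
- have -> : contr (fun I J => \sum_p tens22 (V p) I J)
              (conjarr (fun I J => \sum_p tens22 (V p) I J)) =
            contr (fun I J => \sum_p tens22 (V p) I J)
              (fun I J => \sum_q conjarr (tens22 (V q)) I J).
    by apply: eq_bigr => I _; apply: eq_bigr => J _; rewrite /conjarr rmorph_sum.
  rewrite contr_suml; under eq_bigr do rewrite contr_sumr.
  under eq_bigr do under eq_bigr do rewrite contr_tens_conj.
  by rewrite frame mulrC expr2.
- rewrite contr_suml; under eq_bigr do rewrite contr_tens_weingarten //.
  by rewrite sumr_const mulr_natl.
Qed.

End FramePotential.

Section HaarIntegral.
Context {C : numClosedFieldType} (d : nat).
Local Notation idx := (idx4 d).
Variable E : (idx -> idx -> C) -> C.
Hypothesis hE : haar_integral E.

Lemma polyfunE (c : idx -> idx -> C) (V : 'M[C]_d) : polyfun c V = contr c (tens22 V).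
Proof. by []. Qed.

Lemma contr_entry_coef (K L : idx) (c : idx -> idx -> C) :
  contr (@entry_coef C d K L) c = c K L.
Proof.
rewrite /contr (bigD1 K) //= [X in _ + X]big1 ?addr0; last first.
  by move=> I /negbTE IK; apply: big1 => J _; rewrite /entry_coef IK mul0r.
rewrite (bigD1 L) //= [X in _ + X]big1 ?addr0; last first.
  by move=> J /negbTE JL; rewrite /entry_coef JL andbF mul0r.
by rewrite /entry_coef !eqxx mul1r.
Qed.

(* The identity is unitary; invariance under it gives extensionality. *)
Lemma unitary1 : (1%:M : 'M[C]_d) \is unitarymx.
Proof.
apply/unitarymxP; rewrite mul1mx; apply/matrixP => i j.
by rewrite !mxE eq_sym conjC_nat.
Qed.

Lemma haar_ext (c c' : idx -> idx -> C) :
  (forall V : 'M[C]_d, V \is unitarymx -> polyfun c V = polyfun c' V) -> E c = E c'.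
Proof.
move=> cc'; symmetry; apply: (hE.2.1 1%:M c c' unitary1) => V uV.
by rewrite mul1mx cc'.
Qed.

Lemma haar0 : E (fun _ _ => 0) = 0.
Proof.
have h := hE.1 1 (fun _ _ => 0) (fun _ _ => 0).
have e0 : E (fun _ _ => 1 * 0 + 0) = E (fun _ _ => 0).
  apply: haar_ext => V _.
  by apply: eq_bigr => I _; apply: eq_bigr => J _; rewrite mul1r addr0.
rewrite e0 mul1r in h.
by apply/(addIr (E (fun _ _ => 0))); rewrite add0r -h.
Qed.

Lemma haar_lin (A : eqType) (r : seq A) (w : A -> C) (c : A -> idx -> idx -> C) :
  E (fun I J => \sum_(k <- r) w k * c k I J) = \sum_(k <- r) w k * E (c k).
Proof.
elim: r => [|k r IH].
  rewrite [RHS]big_nil -[RHS]haar0; apply: haar_ext => V _.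
  by apply: eq_bigr => I _; apply: eq_bigr => J _; rewrite big_nil.
rewrite [RHS]big_cons -IH -(hE.1 (w k)); apply: haar_ext => V _.
by apply: eq_bigr => I _; apply: eq_bigr => J _; rewrite big_cons.
Qed.

Lemma haar_const (c : idx -> idx -> C) (b : bool) :
  (forall V : 'M[C]_d, V \is unitarymx -> polyfun c V = b%:R) -> E c = b%:R.
Proof.
case: b => cb; first exact: (hE.2.2 c cb).
change (E c = 0); rewrite -haar0; apply: haar_ext => V uV; rewrite cb //.
by rewrite polyfunE /contr big1 // => I _; rewrite big1 // => J _; rewrite mul0r.
Qed.

(* Index bookkeeping for tens22 (x V): the x-factor has row (i1,i2,k3,k4)
   and column (k1,k2,j3,j4), the V-factor row (k1,k2,i3,i4) and column
   (j1,j2,k3,k4), K = (k1,k2,k3,k4) being the summation index. *)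
Definition lrow (I K : idx) : idx :=
  let: (i1, i2, _, _) := I in let: (_, _, k3, k4) := K in (i1, i2, k3, k4).
Definition lcol (J K : idx) : idx :=
  let: (_, _, j3, j4) := J in let: (k1, k2, _, _) := K in (k1, k2, j3, j4).
Definition rrow (I K : idx) : idx :=
  let: (_, _, i3, i4) := I in let: (k1, k2, _, _) := K in (k1, k2, i3, i4).
Definition rcol (J K : idx) : idx :=
  let: (j1, j2, _, _) := J in let: (_, _, k3, k4) := K in (j1, j2, k3, k4).

Lemma tens22M (x V : 'M[C]_d) I J :
  tens22 (x *m V) I J =
  \sum_K tens22 x (lrow I K) (lcol J K) * tens22 V (rrow I K) (rcol J K).
Proof.
case: I => [[[i1 i2] i3] i4]; case: J => [[[j1 j2] j3] j4].
rewrite sum_idx4 /tens22 /= !adjmxE !mxE !rmorph_sum.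
rewrite prod4_sums; apply: eq_bigr => k1 _; apply: eq_bigr => k2 _.
apply: eq_bigr => k3 _; apply: eq_bigr => k4 _.
by rewrite !rmorphM /= !adjmxE mulr4ACA.
Qed.

(* Left invariance of the Haar integral, written on monomials. *)
Lemma haar_step (x : 'M[C]_d) I J : x \is unitarymx ->
  E (@entry_coef C d I J) =
  \sum_K tens22 x (lrow I K) (lcol J K) * E (@entry_coef C d (rrow I K) (rcol J K)).
Proof.
move=> ux; rewrite -haar_lin; symmetry; apply: (hE.2.1 x) => // V _.
rewrite !polyfunE contr_entry_coef tens22M contr_suml.
by apply: eq_bigr => K _; rewrite contrC contr_scaler contrC contr_entry_coef.
Qed.

(* perm_arr s t factors into a part pairing the U-indices with the
   U^dag-indices on the left, and one pairing them on the right. *)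
Definition row_part (s : bool) (I J : idx) : C :=
  let: (i1, i2, _, _) := I in let: (_, _, j3, j4) := J in perm_delta s i1 i2 j3 j4.
Definition col_part (t : bool) (I J : idx) : C :=
  let: (_, _, i3, i4) := I in let: (j1, j2, _, _) := J in perm_delta t j1 j2 i3 i4.

Lemma perm_arr_split s t I J : perm_arr s t I J = row_part s I J * col_part t I J.
Proof. by case: I => [[[i1 i2] i3] i4]; case: J => [[[j1 j2] j3] j4]. Qed.

Lemma perm_arr_lmix s t I J K :
  perm_arr s t (lrow I K) (lcol J K) = row_part s I J * col_part t K K.
Proof.
case: I => [[[i1 i2] i3] i4]; case: J => [[[j1 j2] j3] j4].
by case: K => [[[k1 k2] k3] k4].
Qed.

Lemma col_part_bool t I J : exists b : bool, col_part t I J = b%:R.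
Proof.
case: I => [[[i1 i2] i3] i4]; case: J => [[[j1 j2] j3] j4].
by rewrite /col_part /perm_delta /kdelta -natrM; eexists; rewrite mulnb.
Qed.

(* Unitarity (U^dag U = 1) makes this combination of monomials constant. *)
Lemma col_part_unitary (V : 'M[C]_d) t I J : V \is unitarymx ->
  \sum_K col_part t K K * tens22 V (rrow I K) (rcol J K) = col_part t I J.
Proof.
move=> uV; case: I => [[[i1 i2] i3] i4]; case: J => [[[j1 j2] j3] j4].
rewrite sum_idx4 /tens22 /col_part /perm_delta /=.
under eq_bigr => k1 _ do under eq_bigr => k2 _ do under eq_bigr => k3 _ do
  under eq_bigr => k4 _ do rewrite mulrC mulrA.
under eq_bigr => k1 _ do under eq_bigr => k2 _ do under eq_bigr => k3 _ do
  rewrite sum_kdelta.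
under eq_bigr => k1 _ do under eq_bigr => k2 _ do rewrite sum_kdelta.
case: t => /=; under eq_bigr => k1 _ do under eq_bigr => k2 _ do rewrite !adjmxE.
- under eq_bigr => k1 _ do under eq_bigr => k2 _ do
    rewrite -mulrA [_^* * _^*]mulrC mulrACA [V k1 j1 * _]mulrC [V k2 j2 * _]mulrC.
  by rewrite sum_mul_sum !(unitary_cols uV) /kdelta mulrC (eq_sym i3) (eq_sym i4).
- under eq_bigr => k1 _ do under eq_bigr => k2 _ do
    rewrite -mulrA mulrACA [V k1 j1 * _]mulrC [V k2 j2 * _]mulrC.
  by rewrite sum_mul_sum !(unitary_cols uV) /kdelta (eq_sym i3) (eq_sym i4).
Qed.

Lemma haar_col_part t I J :
  \sum_K col_part t K K * E (@entry_coef C d (rrow I K) (rcol J K)) =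
  col_part t I J.
Proof.
rewrite -haar_lin; have [b bE] := col_part_bool t I J; rewrite bE.
apply: haar_const => V uV; rewrite -bE -(col_part_unitary t I J uV).
rewrite polyfunE contr_suml.
by under eq_bigr do rewrite contrC contr_scaler contrC contr_entry_coef.
Qed.

Lemma haar_weingarten_average I J :
  \sum_K weingarten (lrow I K) (lcol J K) * E (@entry_coef C d (rrow I K) (rcol J K)) =
  weingarten I J.
Proof.
under eq_bigr => K _ do
  (rewrite /weingarten mulr_suml; under eq_bigr => p _ do rewrite perm_arr_lmix -!mulrA).
rewrite exchange_big; apply: eq_bigr => p _.
by rewrite -!mulr_sumr haar_col_part perm_arr_split.
Qed.

(* Averaging the invariance relation over a 2-design identifies the Haar
   integral of every monomial with the Weingarten array. *)
Lemma haar_of_design (X : finType) (V : X -> 'M[C]_d) :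
  (forall p, V p \is unitarymx) -> #|X|%:R != 0 :> C ->
  (forall I J, \sum_p tens22 (V p) I J = #|X|%:R * weingarten I J) ->
  forall I J, E (@entry_coef C d I J) = weingarten I J.
Proof.
move=> uV X0 design I J; apply: (mulfI X0).
have -> : #|X|%:R * E (@entry_coef C d I J) = \sum_(p : X) E (@entry_coef C d I J).
  by rewrite sumr_const mulr_natl.
rewrite -[in RHS]haar_weingarten_average mulr_sumr.
rewrite (eq_bigr _ (fun p _ => haar_step I J (uV p))) exchange_big.
by apply: eq_bigr => K _; rewrite -mulr_suml design mulrA.
Qed.

End HaarIntegral.

Section MutuallyUnbiasedBases.
Context {C : numClosedFieldType} (d : nat).
Hypothesis d_ge2 : (2 <= d)%N.
Variable U : 'I_(d ^ 2 - 1) -> 'I_(d ^ 2) -> 'M[C]_d.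
Hypothesis hbasis : forall a, unitary_operator_basis (U a).
Hypothesis hmub : forall a b, a != b -> mutually_unbiased (U a) (U b).

Local Notation X := ('I_(d ^ 2 - 1) * 'I_(d ^ 2))%type.

Definition mub_family (p : X) : 'M[C]_d := U p.1 p.2.

Lemma mub_family_unitary p : mub_family p \is unitarymx.
Proof. exact: (hbasis p.1).1. Qed.

Lemma sqr_gt1 : (1 < d ^ 2)%N.
Proof. by rewrite (leq_trans d_ge2) // -{1}(expn1 d) leq_pexp2l // ltnW. Qed.

Lemma card_mub_family : #|{: X}| = (d ^ 2 * (d ^ 2 - 1))%N.
Proof. by rewrite card_prod !card_ord mulnC. Qed.

Lemma card_mub_family_neq0 : #|{: X}|%:R != 0 :> C.
Proof.
rewrite card_mub_family pnatr_eq0 muln_eq0 negb_or -!lt0n subn_gt0 sqr_gt1.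
by rewrite andbT (ltn_trans _ sqr_gt1).
Qed.

(* Against a fixed member, the own basis contributes d^4 and each of the
   d^2 - 2 other bases contributes d^2. *)
Lemma mub_frame_row a j :
  \sum_q (`|\tr (adjmx (mub_family q) *m U a j)| ^+ 2) ^+ 2 =
  (2 * (d ^ 2 * (d ^ 2 - 1)))%:R.
Proof.
rewrite sum_pair (bigD1 a) //=.
have -> : \sum_k (`|\tr (adjmx (mub_family (a, k)) *m U a j)| ^+ 2) ^+ 2 =
          (d ^ 2 * d ^ 2)%:R.
  rewrite (bigD1 j) //= big1 ?addr0 => [|k kj].
    by rewrite /mub_family /= (hbasis a).2 eqxx muln1 normr_nat natrM natrX expr2.
  by rewrite /mub_family /= (hbasis a).2 (negbTE kj) muln0 normr0 !expr0n.
have -> : \sum_(b | b != a) \sum_k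
            (`|\tr (adjmx (mub_family (b, k)) *m U a j)| ^+ 2) ^+ 2 =
          \sum_(b | b != a) (d ^ 2)%:R.
  apply: eq_bigr => b ba; under eq_bigr => k _ do rewrite (hmub ba) expr1n.
  by rewrite sumr_const card_ord.
rewrite sumr_const (_ : #|_| = (d ^ 2 - 1).-1); last first.
  by rewrite -[in RHS](card_ord (d ^ 2 - 1)) -(cardC1 a).
rewrite -[_ *+ (d ^ 2 - 1).-1]mulr_natr -natrM -natrD.
by move: (d ^ 2)%N sqr_gt1 => D D_gt1; congr (_%:R); nia.
Qed.

Lemma mub_frame_potential :
  \sum_p \sum_q (`|\tr (adjmx (mub_family q) *m mub_family p)| ^+ 2) ^+ 2 =
  2 * #|{: X}|%:R ^+ 2.
Proof.
rewrite (eq_bigr _ (fun p _ => mub_frame_row p.1 p.2)) sumr_const card_mub_family.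
by rewrite -[LHS]mulr_natr natrM expr2 mulrA.
Qed.

End MutuallyUnbiasedBases.

Theorem mainTheorem9 (C : numClosedFieldType) (d : nat) (hd : (2 <= d)%N)
    (U : 'I_(d ^ 2 - 1) -> 'I_(d ^ 2) -> 'M[C]_d)
    (hbasis : forall a, unitary_operator_basis (U a))
    (hmub : forall a b, a != b -> mutually_unbiased (U a) (U b))
    (E : (idx4 d -> idx4 d -> C) -> C) (hE : haar_integral E) :
  forall I J : idx4 d,
    ((d ^ 2 * (d ^ 2 - 1))%:R)^-1 *
      (\sum_(a < d ^ 2 - 1) \sum_(j < d ^ 2) tens22 (U a j) I J)
    = E (@entry_coef C d I J).
Proof.
move=> I J.
have uV := mub_family_unitary hbasis.
have design := design_of_frame_potential hd uV (mub_frame_potential hd hbasis hmub).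
have N0 := @card_mub_family_neq0 C _ hd.
rewrite (haar_of_design hE uV N0 design).
rewrite -(sum_pair (fun p => tens22 (mub_family U p) I J)) design card_mub_family.
by rewrite mulrA mulVf ?mul1r // -card_mub_family.
Qed.
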